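(* For every ProbNetKAT program $p$, every $n\in\mathbb{N}$ and all $a,b\subseteq\mathsf{Pk}$, \[ \mathcal{B}[\![p^{(n)}]\!]_{a,b} = \sum_{a'\subseteq\mathsf{Pk}} \big(\mathcal{S}[\![p]\!]^{n+1}\big)_{(a,\emptyset),(a',b)}. \]
   Context: $\mathsf{Pk}$ is a finite set of packets (records of finitely many fields with finitely many values). ProbNetKAT programs are built from predicates $\mathsf{false},\mathsf{true}, f=n$, their negations/disjunctions/conjunctions, assignments $f\leftarrow n$, union $p\,\&\,q$, sequencing $p;q$, probabilistic choice $p\oplus_r q$ and iteration $p^*$. $p^{(0)}=\mathsf{true}$, $p^{(n+1)}=\mathsf{true}\,\&\,(p;p^{(n)})$. The matrix semantics $\mathcal{B}[\![p]\!]\in[0,1]^{2^{\mathsf{Pk}}\times 2^{\mathsf{Pk}}}$ ($[\varphi]$ = Iverson bracket): $\mathcal{B}[\![\mathsf{false}]\!]_{ab}=[b=\emptyset]$; $\mathcal{B}[\![\mathsf{true}]\!]_{ab}=[a=b]$; $\mathcal{B}[\![f=n]\!]_{ab}=[b=\{\pi\in a:\pi.f=n\}]$; $\mathcal{B}[\![\neg t]\!]_{ab}=[b\subseteq a]\mathcal{B}[\![t]\!]_{a,a-b}$; $\mathcal{B}[\![f\leftarrow n]\!]_{ab}=[b=\{\pi[f:=n]:\pi\in a\}]$; $\mathcal{B}[\![p\,\&\,q]\!]_{ab}=\sum_{c,d}[c\cup d=b]\mathcal{B}[\![p]\!]_{ac}\mathcal{B}[\![q]\!]_{ad}$; $\mathcal{B}[\![p;q]\!]=\mathcal{B}[\![p]\!]\mathcal{B}[\![q]\!]$;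 $\mathcal{B}[\![p\oplus_r q]\!]=r\mathcal{B}[\![p]\!]+(1-r)\mathcal{B}[\![q]\!]$; $\mathcal{B}[\![p^*]\!]_{ab}=\lim_n\mathcal{B}[\![p^{(n)}]\!]_{ab}$. The small-step matrix on $2^{\mathsf{Pk}}\times2^{\mathsf{Pk}}$ is $\mathcal{S}[\![p]\!]_{(a,b),(a',b')}=[b'=b\cup a]\,\mathcal{B}[\![p]\!]_{a,a'}$; $\mathcal{S}[\![p]\!]^{m}$ is its $m$-th matrix power. *)

From HB Require Import structures.
From mathcomp Require Import all_boot all_order all_algebra.
From mathcomp Require Import all_classical all_reals all_analysis.
Set Implicit Arguments. Unset Strict Implicit. Unset Printing Implicit Defensive.
Import Order.TTheory GRing.Theory Num.Theory.
Import numFieldNormedType.Exports.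
Local Open Scope ring_scope.

Section ProbNetKAT.
Variables (R : realType) (F : finType) (V : F -> finType).

Definition Pk : finType := {dffun forall f : F, V f}.

Definition pk_upd (pi : Pk) (f : F) (n : V f) : Pk :=
  [ffun g => @dfwith F (fun h => V h) (fun h => pi h) f n g].

Definition prob := {r : R | 0 <= r <= 1}.

Inductive test :=
| TFalse | TTrue | TEq (f : F) (n : V f)
| TNeg (t : test) | TOr (t u : test) | TAnd (t u : test).

Inductive prog :=
| PTest (t : test)
| PAssign (f : F) (n : V f)
| PUnion (p q : prog)
| PSeq (p q : prog)
| PChoice (p : prog) (r : prob) (q : prog)
| PStar (p : prog).

Fixpoint piter (p : prog) (n : nat) : prog :=
  match n with
  | 0 => PTest TTrue
  | n'.+1 => PUnion (PTest TTrue) (PSeq p (piter p n'))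
  end.

Definition mat (I : finType) := I -> I -> R.
Definition mmul (I : finType) (A B : mat I) : mat I :=
  fun i k => \sum_(j : I) A i j * B j k.
Definition mid (I : finType) : mat I := fun i j => (i == j)%:R.
Fixpoint mpow (I : finType) (A : mat I) (m : nat) : mat I :=
  match m with 0 => @mid I | m'.+1 => mmul (mpow A m') A end.

Definition St := {set Pk}.

Definition munion (M N : mat St) : mat St :=
  fun a b => \sum_(c : St) \sum_(d : St) ((c :|: d) == b)%:R * M a c * N a d.

Definition B_id : mat St := fun a b => (a == b)%:R.

Fixpoint Btest (t : test) : mat St :=
  match t with
  | TFalse => fun a b => (b == finset.set0)%:R
  | TTrue => B_id
  | TEq f n => fun a b => (b == [set pi in a | pi f == n])%:R
  | TNeg t => fun a b => (b \subset a)%:R * Btest t a (a :\: b)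
  | TOr t u => munion (Btest t) (Btest u)
  | TAnd t u => mmul (Btest t) (Btest u)
  end.

Fixpoint Biter (P : mat St) (n : nat) : mat St :=
  match n with
  | 0 => B_id
  | n'.+1 => munion B_id (mmul P (Biter P n'))
  end.

Fixpoint Bsem (p : prog) : mat St :=
  match p with
  | PTest t => Btest t
  | PAssign f n => fun a b => (b == [set pk_upd pi n | pi in a])%:R
  | PUnion p q => munion (Bsem p) (Bsem q)
  | PSeq p q => mmul (Bsem p) (Bsem q)
  | PChoice p r q => fun a b => sval r * Bsem p a b + (1 - sval r) * Bsem q a b
  | PStar p => fun a b => limn (fun n => Biter (Bsem p) n a b)
  end.

Definition Ssem (p : prog) : mat (St * St)%type :=
  fun x y => ((y.2 == x.2 :|: x.1)%:R) * Bsem p x.1 y.1.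

End ProbNetKAT.

(* The second component of a small-step state accumulates every packet set that
   has been emitted, so after [n+1] steps from [(a, {})] it holds the union of
   all outputs of [true & p; (true & p; ...)], which is the output of [p^(n)].
   Summing out the first component only marginalises the last step, provided
   every row of [B[p]] sums to one. Every program denotes a stochastic matrix;
   for [p*] this needs the entries of [B[p^(n)]] to converge. They do: the mass
   that [p^(n)] puts on subsets of a fixed [S] is nonincreasing in [n], and the
   entry at [b] is that mass at [S = b] minus the entries at proper subsets of
   [b], so convergence follows by induction on [#|b|]. *)
From HB Require Import structures.
From mathcomp Require Import all_boot all_order all_algebra.
From mathcomp Require Import all_classical all_reals all_analysis.
Import Order.TTheory GRing.Theory Num.Theory.
Import numFieldNormedType.Exports.
Local Open Scope classical_set_scope.
Local Open Scope ring_scope.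

Section DeltaSums.
Context {R : pzSemiRingType} {I : finType}.

Lemma sum_delta_l (c : I) (G : I -> R) : \sum_i (i == c)%:R * G i = G c.
Proof.
rewrite (bigD1 c) //= eqxx mul1r big1 ?addr0 // => i /negbTE ->.
by rewrite mul0r.
Qed.

Lemma sum_delta_r (c : I) (G : I -> R) : \sum_i (c == i)%:R * G i = G c.
Proof. by under eq_bigr do rewrite eq_sym; rewrite sum_delta_l. Qed.

Lemma sum_delta (c : I) : \sum_i (c == i)%:R = 1 :> R.
Proof. by under eq_bigr do rewrite -[_%:R]mulr1; rewrite sum_delta_r. Qed.

End DeltaSums.

Section MatrixPowers.
Context {R : realType} {I : finType}.
Implicit Types A B C : mat R I.

Lemma mmulA A B C i k : mmul (mmul A B) C i k = mmul A (mmul B C) i k.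
Proof.
rewrite /mmul; under eq_bigr do rewrite big_distrl /=.
rewrite exchange_big /=; apply: eq_bigr => l _.
by rewrite big_distrr /=; apply: eq_bigr => j _; rewrite mulrA.
Qed.

Lemma mpow1 A i k : mpow A 1 i k = A i k.
Proof. by rewrite /= /mmul /mid sum_delta_r. Qed.

Lemma mpowSl A m i k : mpow A m.+1 i k = mmul A (mpow A m) i k.
Proof.
elim: m i k => [|m IH] i k.
  rewrite mpow1 /mmul /mid.
  by under eq_bigr do rewrite mulrC; rewrite sum_delta_l.
rewrite -[RHS]/(mmul A (mmul (mpow A m) A) i k) -mmulA.
rewrite -[LHS]/(mmul (mpow A m.+1) A i k).
by rewrite /mmul; apply: eq_bigr => j _; rewrite IH.
Qed.

End MatrixPowers.

Section SmallStep.
Context {R : realType} {F : finType} {V : F -> finType}.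
Notation St := (St V).
Implicit Types (P X : mat R St) (a b c d e : St).

Lemma munion_idl X a b :
  munion (@B_id R F V) X a b = \sum_d ((a :|: d) == b)%:R * X a d.
Proof.
rewrite /munion /B_id.
under eq_bigr do under eq_bigr do rewrite mulrAC mulrC.
by under eq_bigr do rewrite -big_distrr /=; rewrite sum_delta_r.
Qed.

Lemma BiterS P n a b :
  Biter P n.+1 a b = \sum_d ((a :|: d) == b)%:R * \sum_e P a e * Biter P n e d.
Proof. by rewrite /= munion_idl. Qed.

Definition small_step P : mat R (St * St)%type :=
  fun x y => (y.2 == x.2 :|: x.1)%:R * P x.1 y.1.

Lemma Ssem_small_step (p : prog R V) : Ssem p = small_step (Bsem p).
Proof. by []. Qed.

Lemma sum_small_step_pow P n a c b : (forall a, \sum_b P a b = 1) ->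
  \sum_a' mpow (small_step P) n.+1 (a, c) (a', b) =
  \sum_d ((c :|: d) == b)%:R * Biter P n a d.
Proof.
move=> P1; elim: n a c b => [|n IH] a c b.
  under eq_bigr do rewrite mpow1 /small_step /=.
  rewrite -big_distrr /= P1 mulr1 /B_id.
  by under eq_bigr do rewrite mulrC; rewrite sum_delta_r eq_sym.
pose H e c' := \sum_d ((c' :|: d) == b)%:R * Biter P n e d.
have first_step : \sum_a' mpow (small_step P) n.+2 (a, c) (a', b) =
    \sum_e P a e * H e (c :|: a).
  under eq_bigr do rewrite mpowSl /mmul.
  rewrite exchange_big /=; under eq_bigr do rewrite -big_distrr /=.
  transitivity (\sum_(y : St * St) small_step P (a, c) y * H y.1 y.2).
    by apply: eq_bigr => -[e c'] _; rewrite IH.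
  rewrite -(pair_bigA _ (fun e c' => small_step P (a, c) (e, c') * H e c')) /=.
  apply: eq_bigr => e _; rewrite /small_step /=.
  by under eq_bigr do rewrite mulrAC -mulrA; rewrite sum_delta_l mulrC.
rewrite first_step /H.
under eq_bigr do rewrite big_distrr /=.
rewrite exchange_big /=.
under [RHS]eq_bigr do rewrite munion_idl big_distrr /=.
rewrite [RHS]exchange_big /=; apply: eq_bigr => d _.
under [RHS]eq_bigr do rewrite mulrCA.
rewrite sum_delta_r finset.setUA big_distrr /=.
by apply: eq_bigr => e _; rewrite mulrCA.
Qed.

End SmallStep.

Lemma cvgn_sum {R : realType} {I : Type} (r : seq I) (Pr : pred I)
    (u : I -> nat -> R) : (forall i, Pr i -> cvgn (u i)) ->
  \sum_(i <- r | Pr i) u i n @[n --> \oo] --> \sum_(i <- r | Pr i) limn (u i).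
Proof.
move=> cvg_u; apply: cvg_big => [|i Pi]; first exact: add_continuous.
exact: cvg_u.
Qed.

Section Stochastic.
Context {R : realType} {F : finType} {V : F -> finType}.
Notation St := (St V).
Implicit Types (P M N : mat R St) (a b c d e S : St).

Definition stochastic P :=
  (forall a b, 0 <= P a b) /\ (forall a, \sum_b P a b = 1).

Lemma stochastic_ext P M : (forall a b, P a b = M a b) ->
  stochastic M -> stochastic P.
Proof.
move=> eqPM [M0 M1]; split=> [a b|a]; first by rewrite eqPM.
by under eq_bigr do rewrite eqPM; apply: M1.
Qed.

Lemma stochastic_det (f : St -> St) : stochastic (fun a b => (b == f a)%:R).
Proof.
split=> [a b|a]; first exact: ler0n.
by under eq_bigr do rewrite eq_sym; rewrite sum_delta.
Qed.

Lemma stochastic_id : stochastic (@B_id R F V).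
Proof. by split=> [a b|a]; [exact: ler0n | exact: sum_delta]. Qed.

Lemma stochastic_munion M N :
  stochastic M -> stochastic N -> stochastic (munion M N).
Proof.
move=> [M0 M1] [N0 N1]; split=> [a b|a].
  by do 2!apply: sumr_ge0 => ? _; rewrite !mulr_ge0 ?ler0n.
rewrite /munion exchange_big /=; under eq_bigr do rewrite exchange_big /=.
transitivity (\sum_c \sum_d M a c * N a d).
  apply: eq_bigr => c _; apply: eq_bigr => d _.
  by under eq_bigr do rewrite -mulrA; rewrite -big_distrl /= sum_delta mul1r.
by under eq_bigr do rewrite -big_distrr /= N1 mulr1; apply: M1.
Qed.

Lemma stochastic_mmul M N :
  stochastic M -> stochastic N -> stochastic (mmul M N).
Proof.
move=> [M0 M1] [N0 N1]; split=> [a b|a].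
  by apply: sumr_ge0 => c _; rewrite mulr_ge0.
rewrite /mmul exchange_big /=.
by under eq_bigr do rewrite -big_distrr /= N1 mulr1; apply: M1.
Qed.

Lemma stochastic_choice M N (r : R) : 0 <= r <= 1 ->
  stochastic M -> stochastic N ->
  stochastic (fun a b => r * M a b + (1 - r) * N a b).
Proof.
move=> /andP[r0 r1] [M0 M1] [N0 N1]; split=> [a b|a].
  by rewrite addr_ge0 ?mulr_ge0 ?subr_ge0.
by rewrite big_split /= -!big_distrr /= M1 N1 !mulr1 addrC subrK.
Qed.

Lemma stochastic_Biter {P} n : stochastic P -> stochastic (Biter P n).
Proof.
move=> sP; elim: n => [|n IH] /=; first exact: stochastic_id.
by apply: stochastic_munion; [exact: stochastic_id | exact: stochastic_mmul].
Qed.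

Definition Biter_mass_sub P (n : nat) a S : R :=
  \sum_(b : St) (b \subset S)%:R * Biter P n a b.

Lemma Biter_mass_sub0 P a S : Biter_mass_sub P 0 a S = (a \subset S)%:R.
Proof.
rewrite /Biter_mass_sub /= /B_id.
by under eq_bigr do rewrite mulrC; rewrite sum_delta_r.
Qed.

(* [a :|: d \subset S] splits as [a \subset S] and [d \subset S]. *)
Lemma Biter_mass_subS P n a S : Biter_mass_sub P n.+1 a S =
  (a \subset S)%:R * \sum_e P a e * Biter_mass_sub P n e S.
Proof.
rewrite /Biter_mass_sub; under eq_bigr do rewrite BiterS big_distrr /=.
rewrite exchange_big /=.
under eq_bigr do under eq_bigr do rewrite mulrCA.
under eq_bigr do rewrite sum_delta_r finset.subUset -mulnb natrM -mulrA.
rewrite -big_distrr /=; congr (_ * _).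
under eq_bigr do rewrite big_distrr /=.
rewrite exchange_big /=; apply: eq_bigr => e _.
by rewrite big_distrr /=; apply: eq_bigr => d _; rewrite mulrCA.
Qed.

Lemma Biter_mass_sub_ge0 P n a S : stochastic P -> 0 <= Biter_mass_sub P n a S.
Proof.
move=> /(stochastic_Biter n)[Biter0 _].
by apply: sumr_ge0 => b _; rewrite mulr_ge0 ?ler0n.
Qed.

Lemma Biter_mass_sub_nonincr P S a : stochastic P ->
  {homo (fun n => Biter_mass_sub P n a S) : n m / (n <= m)%N >-> m <= n}.
Proof.
move=> [P0 P1]; apply/nonincreasing_seqP => n; elim: n a => [|n IH] a.
  rewrite Biter_mass_subS Biter_mass_sub0 -[leRHS]mulr1.
  rewrite ler_wpM2l ?ler0n // -(P1 a) ler_sum // => e _.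
  by rewrite Biter_mass_sub0 ler_piMr ?lern1 ?leq_b1.
rewrite [leLHS]Biter_mass_subS [leRHS]Biter_mass_subS.
by rewrite ler_wpM2l ?ler0n // ler_sum // => e _; rewrite ler_wpM2l.
Qed.

Lemma Biter_mass_sub_cvg P a S : stochastic P ->
  cvgn (fun n => Biter_mass_sub P n a S).
Proof.
move=> sP; apply: nonincreasing_is_cvgn; first exact: Biter_mass_sub_nonincr.
by exists 0 => _ [n _ <-]; apply: Biter_mass_sub_ge0.
Qed.

Lemma Biter_cvg {P} a b : stochastic P -> cvgn (fun n => Biter P n a b).
Proof.
move=> sP; have [k] := ubnP #|b|; elim: k b => // k IH b ltbk.
have mass_split n : Biter P n a b = Biter_mass_sub P n a b -
    \sum_(b' : St | b' \proper b) Biter P n a b'.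
  rewrite /Biter_mass_sub
    (eq_bigr (fun b' => if b' \subset b then Biter P n a b' else 0)).
    rewrite -big_mkcond (bigD1 b) //=.
    under [X in _ = _ + X - _]eq_bigl do rewrite andbC -finset.properEneq.
    by rewrite addrK.
  by move=> b' _; case: (b' \subset b); rewrite ?mul1r ?mul0r.
under eq_fun do rewrite mass_split.
apply: is_cvgB; first exact: Biter_mass_sub_cvg.
apply: cvgP; apply: cvgn_sum => b' ltb'b; apply: IH.
by rewrite -ltnS (leq_trans _ ltbk) // ltnS proper_card.
Qed.

Lemma stochastic_star P : stochastic P ->
  stochastic (fun a b => limn (fun n => Biter P n a b)).
Proof.
move=> sP; split=> [a b|a].
  apply: limr_ge; first exact: Biter_cvg.
  by apply: nearW => n; have [Biter0 _] := stochastic_Biter n sP.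
have /cvg_lim <- // := cvgn_sum (index_enum St) xpredT (fun b n => Biter P n a b)
  (fun b _ => Biter_cvg a b sP).
under eq_fun => n do rewrite (proj2 (stochastic_Biter n sP) a).
exact: lim_cst.
Qed.

End Stochastic.

Section Programs.
Context {R : realType} {F : finType} {V : F -> finType}.
Notation St := (St V).
Implicit Types (a b c : St) (t : test V) (p : prog R V).

Lemma subset_setD_eq a b c : c \subset a ->
  (b \subset a) && (a :\: b == c) = (b == a :\: c).
Proof.
move=> sca; apply/andP/eqP => [[sba /eqP <-]|->]; last split.
- by rewrite finset.setDDr finset.setDv finset.set0U; apply/esym/finset.setIidPr.
- exact: finset.subsetDl.
- by rewrite finset.setDDr finset.setDv finset.set0U; apply/eqP/finset.setIidPr.
Qed.

(* The inclusion [f a \subset a] is what lets the negation case go through. *)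
Lemma Btest_det t : exists f : St -> St,
  (forall a, f a \subset a) /\ forall a b, Btest R t a b = (b == f a)%:R.
Proof.
elim: t => [||g n|t [f [sf ef]]|t [f [sf ef]] u [h [sh eh]]
            |t [f [sf ef]] u [h [sh eh]]].
- by exists (fun=> finset.set0); split=> // a; exact: finset.sub0set.
- by exists id; split=> // a b /=; rewrite /B_id eq_sym.
- exists (fun a => [set pi in a | pi g == n]); split=> // a.
  by apply/fintype.subsetP => x; rewrite finset.inE => /andP[].
- exists (fun a => a :\: f a); split=> [a|a b]; first exact: finset.subsetDl.
  by rewrite /= ef -natrM mulnb subset_setD_eq.
- exists (fun a => f a :|: h a); split=> [a|a b].
    by rewrite finset.subUset sf sh.
  rewrite /= /munion; under eq_bigr do under eq_bigr do rewrite ef eh mulrC.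
  under eq_bigr do rewrite sum_delta_l mulrC.
  by rewrite sum_delta_l eq_sym.
- exists (fun a => h (f a)); split=> [a|a b].
    exact: fintype.subset_trans (sh _) (sf _).
  by rewrite /= /mmul; under eq_bigr do rewrite ef eh; rewrite sum_delta_l.
Qed.

Lemma stochastic_Bsem p : stochastic (Bsem p).
Proof.
elim: p => [t|g n|p sp q sq|p sp q sq|p sp r q sq|p sp] /=.
- have [f [_ ef]] := Btest_det t.
  exact: (stochastic_ext _ _ ef (stochastic_det f)).
- exact: stochastic_det.
- exact: stochastic_munion.
- exact: stochastic_mmul.
- exact: (stochastic_choice _ _ _ (svalP r)).
- exact: stochastic_star.
Qed.

Lemma Bsem_piter p n : Bsem (piter p n) = Biter (Bsem p) n.
Proof. by elim: n => //= n ->. Qed.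

End Programs.

Theorem proposition4p2 (R : realType) (F : finType) (V : F -> finType)
  (p : prog R V) (n : nat) (a b : St V) :
  Bsem (piter p n) a b =
  \sum_(a' : St V) mpow (Ssem p) n.+1 (a, finset.set0) (a', b).
Proof.
rewrite Bsem_piter Ssem_small_step sum_small_step_pow; last first.
  by have [_ row_sum1] := stochastic_Bsem p.
by under eq_bigr do rewrite finset.set0U; rewrite sum_delta_l.
Qed.
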